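(* For all $j_1,j_2,j_3\in\tfrac12\mathbb{N}^+$, with the three tensor factors of sizes $2j_1+1,2j_2+1,2j_3+1$: \begin{align*} R^{(j_1,j_2)}_{12}(t)\widehat R^{(j_1,j_3)}_{13}\widehat R^{(j_2,j_3)}_{23}&=\widehat R^{(j_2,j_3)}_{23}\widehat R^{(j_1,j_3)}_{13}R^{(j_1,j_2)}_{12}(t),\\ R^{(j_1,j_3)}_{13}(t)\widehat R^{(j_2,j_3)}_{23}\widehat R^{(j_1,j_2)}_{12}&=\widehat R^{(j_1,j_2)}_{12}\widehat R^{(j_2,j_3)}_{23}R^{(j_1,j_3)}_{13}(t),\\ R^{(j_2,j_3)}_{23}(t)\widehat R^{(j_1,j_2)}_{12}\widehat R^{(j_1,j_3)}_{13}&=\widehat R^{(j_1,j_3)}_{13}\widehat R^{(j_1,j_2)}_{12}R^{(j_2,j_3)}_{23}(t),\\ R^{(j_1,j_2)}_{12}(t)\widehat R^{(j_2,j_3)}_{23}\widehat R^{(j_1,j_3)}_{13}&=\widehat R^{(j_1,j_3)}_{13}\widehat R^{(j_2,j_3)}_{23}R^{(j_1,j_2)}_{12}(t),\\ R^{(j_1,j_3)}_{13}(t)\widehat R^{(j_1,j_2)}_{12}\widehat R^{(j_2,j_3)}_{23}&=\widehat R^{(j_2,j_3)}_{23}\widehat R^{(j_1,j_2)}_{12}R^{(j_1,j_3)}_{13}(t),\\ R^{(j_2,j_3)}_{23}(t)\widehat R^{(j_1,j_3)}_{13}\widehat R^{(j_1,j_2)}_{12}&=\widehat R^{(j_1,j_2)}_{12}\widehat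 R^{(j_1,j_3)}_{13}R^{(j_2,j_3)}_{23}(t). \end{align*}
   Context: $\mathbb{F}$ is a field of characteristic zero in which every element has a square root; $q\in\mathbb{F}$ nonzero, not a root of unity, with fixed square root $q^{1/2}$ ($q^{k/2}:=(q^{1/2})^k$); other $(\cdot)^{1/2}$ are fixed square roots in $\mathbb{F}$. $[n]_q=\frac{q^n-q^{-n}}{q-q^{-1}}$, $c(t)=t-t^{-1}$, $\tfrac12\mathbb{N}^+=\{\tfrac12,1,\tfrac32,\dots\}$, $t$ an indeterminate, $\otimes$ Kronecker product. Leg notation: for factors $\mathbb{F}^{n_1}\otimes\mathbb{F}^{n_2}\otimes\mathbb{F}^{n_3}$, $X_{12}=X\otimes I_{n_3}$, $X_{23}=I_{n_1}\otimes X$, $X_{13}=P(X\otimes I_{n_2})P$ with $P$ the flip of factors 2,3; for non-square $Y$, $Y_{12}=Y\otimes I_{n_3}$, $Y_{23}=I_{n_1}\otimes Y$. For $j\in\tfrac12\mathbb{N}^+$: $\mathcal{E}^{(j+\frac12)}$ is $(4j+2)\times(2j+2)$ with only nonzero entries $\mathcal{E}_{(a,a)}=\big(\frac{[2j+2-a]_q}{[2j+1]_q}\big)^{1/2}$, $\mathcal{E}_{(a+2j+1,a+1)}=\big(\frac{[a]_q}{[2j+1]_q}\big)^{1/2}$ ($1\le a\le 2j+1$); $\mathcal{F}^{(j+\frac12)}$ is $(2j+2)\times(4j+2)$ with only nonzero entries $\mathcal{F}_{(a,a)}=\frac{([2j+2-a]_q[2j+1]_q)^{1/2}}{[2j+2-a]_q+[a-1]_q}$,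 $\mathcal{F}_{(a+1,a+2j+1)}=\frac{([a]_q[2j+1]_q)^{1/2}}{[2j+1-a]_q+[a]_q}$ ($1\le a\le 2j+1$). $R^{(\frac12,\frac12)}(t)$ is the $4\times4$ matrix with rows $(c(qt),0,0,0),(0,c(t),c(q),0),(0,c(q),c(t),0),(0,0,0,c(qt))$; recursively $R^{(\frac12,j+\frac12)}(t)=\mathcal{F}^{(j+\frac12)}_{23}R^{(\frac12,j)}_{13}(q^{-1/2}t)R^{(\frac12,\frac12)}_{12}(q^{j}t)\mathcal{E}^{(j+\frac12)}_{23}$ (factor sizes $2,2,2j+1$) and $R^{(j_1+\frac12,j_2)}(t)=\mathcal{F}^{(j_1+\frac12)}_{12}R^{(\frac12,j_2)}_{13}(q^{-j_1}t)R^{(j_1,j_2)}_{23}(q^{1/2}t)\mathcal{E}^{(j_1+\frac12)}_{12}$ (factor sizes $2,2j_1+1,2j_2+1$). $\widehat R^{(j_1,j_2)}=q^{2\,\mathrm{diag}(j_1,\dots,-j_1)\otimes\mathrm{diag}(j_2,\dots,-j_2)}$ (diagonal with entries $q^{2\alpha\beta}$). *)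

From HB Require Import structures.
From mathcomp Require Import all_boot all_order all_algebra.
From mathcomp Require Import fraction.
From mathcomp.real_closed Require Export mxtens.
Set Implicit Arguments. Unset Strict Implicit. Unset Printing Implicit Defensive.
Import Order.TTheory GRing.Theory Num.Theory.
Local Open Scope ring_scope.

(* Kronecker product from mathcomp-real-closed (row-major: index (i,k) of
   'I_m * 'I_n is i * n + k). *)
Notation "A *t B" := (tensmx A B)
  (at level 40, left associativity, format "A  *t  B") : ring_scope.

Section Legs.
Variable K : pzRingType.

Definition leg12 (n1 n2 n3 : nat) (X : 'M[K]_(n1 * n2)) : 'M[K]_(n1 * n2 * n3) :=
  X *t (1%:M : 'M[K]_n3).

Definition leg23 (n1 n2 n3 : nat) (X : 'M[K]_(n2 * n3)) : 'M[K]_(n1 * n2 * n3) :=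
  castmx (mulnA n1 n2 n3, mulnA n1 n2 n3) ((1%:M : 'M[K]_n1) *t X).

(* the flip P of factors 2 and 3:  e_a (x) e_c (x) e_b  |->  e_a (x) e_b (x) e_c,
   as a matrix from F^n1 (x) F^n3 (x) F^n2 to F^n1 (x) F^n2 (x) F^n3 *)
Definition flip23 (n1 n2 n3 : nat) : 'M[K]_(n1 * n2 * n3, n1 * n3 * n2) :=
  \matrix_(i, j)
    (let: (i12, i3) := mxtens_unindex i in
     let: (i1, i2) := mxtens_unindex i12 in
     let: (j13, j2) := mxtens_unindex j in
     let: (j1, j3) := mxtens_unindex j13 in
     ((i1 == j1) && (i2 == j2) && (i3 == j3))%:R).

Definition leg13 (n1 n2 n3 : nat) (X : 'M[K]_(n1 * n3)) : 'M[K]_(n1 * n2 * n3) :=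
  flip23 n1 n2 n3 *m (X *t (1%:M : 'M[K]_n2)) *m flip23 n1 n3 n2.

End Legs.
Arguments leg12 {K} n1 n2 n3 X.
Arguments leg23 {K} n1 n2 n3 X.
Arguments leg13 {K} n1 n2 n3 X.
Arguments flip23 {K} n1 n2 n3.

Section RMatrices.
Variable F : fieldType.
Variable qh : F.
Variable sq : F -> F.     (* the fixed choice of square roots in F *)

Definition q : F := qh ^+ 2.

Definition qnum (n : nat) : F := (q ^+ n - q ^- n) / (q - q^-1).

(* E^{(j+1/2)} for 2j+1 = N := m+2, a (2N) x (N+1) matrix.
   Entries are written with 1-based indices r = i+1 (row), c = j+1 (column):
   E_(a,a) = sqrt([N+1-a]/[N]),  E_(a+N,a+1) = sqrt([a]/[N]),  1 <= a <= N. *)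
Definition Emat (m : nat) : 'M[F]_(2 * m.+2, m.+3) :=
  let N := m.+2 in
  \matrix_(i, j)
    (let r := i.+1 in let c := j.+1 in
     if ((r <= N) && (c == r))%N then sq (qnum (N.+1 - r)%N / qnum N)
     else if ((N < r) && (c == (r - N).+1))%N then sq (qnum (r - N)%N / qnum N)
     else 0).

(* F^{(j+1/2)} for 2j+1 = N := m+2, an (N+1) x (2N) matrix:
   F_(a,a) = sqrt([N+1-a][N]) / ([N+1-a] + [a-1]),
   F_(a+1,a+N) = sqrt([a][N]) / ([N-a] + [a]),  1 <= a <= N. *)
Definition Fmat (m : nat) : 'M[F]_(m.+3, 2 * m.+2) :=
  let N := m.+2 in
  \matrix_(i, j)
    (let r := i.+1 in let c := j.+1 in
     if ((c <= N) && (r == c))%N then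
       sq (qnum (N.+1 - c)%N * qnum N) / (qnum (N.+1 - c)%N + qnum c.-1)
     else if ((N < c) && (r == (c - N).+1))%N then
       sq (qnum (c - N)%N * qnum N) / (qnum (N - (c - N))%N + qnum (c - N)%N)
     else 0).

Definition K := {fraction {poly F}}.
Definition Kc (c : F) : K := @FracField.tofrac {poly F} (c%:P).
Definition tK : K := @FracField.tofrac {poly F} 'X.

Definition cfun (x : K) : K := x - x^-1.

Definition Rbase (t : K) : 'M[K]_(2 * 2) :=
  \matrix_(i, j)
    (match nat_of_ord i, nat_of_ord j with
     | 0, 0 => cfun (Kc q * t)
     | 1, 1 => cfun t
     | 1, 2 => cfun (Kc q)
     | 2, 1 => cfun (Kc q)
     | 2, 2 => cfun t
     | 3, 3 => cfun (Kc q * t)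
     | _, _ => 0
     end).

(* Rhalf m t = R^{(1/2, j)}(t) with 2j = m+1 (so 2j+1 = m+2). *)
Fixpoint Rhalf (m : nat) (t : K) : 'M[K]_(2 * m.+2) :=
  match m return 'M[K]_(2 * m.+2) with
  | 0 => Rbase t
  | m'.+1 =>
      (* j = (m'+1)/2, factor sizes 2, 2, 2j+1 = m'+2 *)
      castmx (erefl, mulnA 2 2 m'.+2)
        ((1%:M : 'M[K]_2) *t map_mx Kc (Fmat m'))
      *m leg13 2 2 m'.+2 (Rhalf m' (Kc qh^-1 * t))
      *m leg12 2 2 m'.+2 (Rbase (Kc (qh ^+ m'.+1) * t))
      *m castmx (mulnA 2 2 m'.+2, erefl)
        ((1%:M : 'M[K]_2) *t map_mx Kc (Emat m'))
  end.

(* Rgen a b t = R^{(j1, j2)}(t) with 2 j1 = a+1, 2 j2 = b+1. *)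
Fixpoint Rgen (a b : nat) (t : K) : 'M[K]_(a.+2 * b.+2) :=
  match a return 'M[K]_(a.+2 * b.+2) with
  | 0 => Rhalf b t
  | a'.+1 =>
      (* j1 = (a'+1)/2, factor sizes 2, 2j1+1 = a'+2, 2j2+1 = b+2 *)
      (map_mx Kc (Fmat a') *t (1%:M : 'M[K]_b.+2))
      *m leg13 2 a'.+2 b.+2 (Rhalf b (Kc (qh ^+ a'.+1)^-1 * t))
      *m leg23 2 a'.+2 b.+2 (Rgen a' b (Kc qh * t))
      *m (map_mx Kc (Emat a') *t (1%:M : 'M[K]_b.+2))
  end.

(* \hat R^{(j1,j2)} = q^{2 diag(j1..-j1) (x) diag(j2..-j2)}, 2 j1 = a+1, 2 j2 = b+1:
   the diagonal entry at index (i,k) is q^{2 alpha beta} = (q^{1/2})^{4 alpha beta}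
   with alpha = j1 - i, beta = j2 - k, i.e. exponent (a+1-2i)(b+1-2k). *)
Definition Rhat (a b : nat) : 'M[K]_(a.+2 * b.+2) :=
  \matrix_(i, j)
    (let: (i1, i2) := mxtens_unindex i in
     if i == j then
       Kc (qh ^ (((a.+1)%:Z - 2 * (i1 : nat)%:Z) * ((b.+1)%:Z - 2 * (i2 : nat)%:Z)))
     else 0).

End RMatrices.

(* The matrices R^{(j1,j2)}(t) conserve the weight: their entry at
   (e_{i1} (x) e_{i2}, e_{k1} (x) e_{k2}) vanishes unless i1 + i2 = k1 + k2.  This
   holds for R^{(1/2,1/2)}(t), for the fusion matrices E and F (reading the index
   of the fused factor as a weight), and it survives the products and leg
   embeddings of the recursive definition.  Hence R_{12}(t) only links basis
   vectors with equal i1 + i2 and equal i3, while \hat R_{13} \hat R_{23} is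
   diagonal with entry q^{2 (alpha1 + alpha2) alpha3}, a function of i1 + i2 and
   i3 alone; so they commute, and the diagonal factors commute with each other.
   The other identities are the same argument for the other legs. *)

From HB Require Import structures.
From mathcomp Require Import all_boot all_order all_algebra.
From mathcomp Require Import fraction.
From mathcomp Require Import zify ring.
Import Order.TTheory GRing.Theory Num.Theory.
Local Open Scope ring_scope.
Set Implicit Arguments. Unset Strict Implicit.

Section GradedMatrices.
Variable R : pzRingType.

(* Gradings read the nat value of an index, so they are insensitive to castmx. *)
Definition graded T m n (f g : nat -> T) (M : 'M[R]_(m, n)) :=
  forall (i : 'I_m) (j : 'I_n), M i j != 0 -> f i = g j.

Lemma mul_neq0_factors (x y : R) : x * y != 0 -> (x != 0) && (y != 0).
Proof.
move=> nz; apply/andP; split; apply: contraNneq nz => ->;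
  by rewrite ?mul0r ?mulr0.
Qed.

Lemma graded_regrade T U m n (f g : nat -> T) (f' g' : nat -> U) (h : T -> U)
    (M : 'M[R]_(m, n)) :
  (forall i : 'I_m, f' i = h (f i)) -> (forall j : 'I_n, g' j = h (g j)) ->
  graded f g M -> graded f' g' M.
Proof. by move=> ef eg gM i j /gM fg; rewrite ef eg fg. Qed.

Lemma graded_mul T m n p (f g h : nat -> T) (M : 'M[R]_(m, n)) (N : 'M[R]_(n, p)) :
  graded f g M -> graded g h N -> graded f h (M *m N).
Proof.
move=> gM gN i j; rewrite mxE => nz.
have [k /mul_neq0_factors/andP[/gM -> /gN //] | all0] :=
  pickP (fun k => M i k * N k j != 0).
by case/eqP: nz; apply: big1 => k _; apply/eqP/negbFE; exact: all0.
Qed.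

Lemma graded_tens T1 T2 T3 (op : T1 -> T2 -> T3) m n p r
    (f g : nat -> T1) (f' g' : nat -> T2) (A : 'M[R]_(m, n)) (B : 'M[R]_(p, r)) :
  graded f g A -> graded f' g' B ->
  graded (fun i => op (f (i %/ p)%N) (f' (i %% p)%N))
         (fun j => op (g (j %/ r)%N) (g' (j %% r)%N)) (A *t B).
Proof.
by move=> gA gB i j; rewrite mxE => /mul_neq0_factors/andP[/gA /= -> /gB /= ->].
Qed.

Lemma graded_castmx T m n m' n' (e : (m = m') * (n = n')) (f g : nat -> T)
    (M : 'M[R]_(m, n)) :
  graded f g M -> graded f g (castmx e M).
Proof. by move=> gM i j; rewrite castmxE => /gM. Qed.

Lemma graded_scalar1 T n (f : nat -> T) : graded f f (1%:M : 'M[R]_n).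
Proof. by move=> i j; rewrite mxE; case: (i =P j) => [->|_]; rewrite ?eqxx. Qed.

End GradedMatrices.

Lemma graded_map_mx (R S : pzRingType) (h : R -> S) T m n (f g : nat -> T)
    (M : 'M[R]_(m, n)) :
  h 0 = 0 -> graded f g M -> graded f g (map_mx h M).
Proof.
move=> h0 gM i j; rewrite mxE => nz; apply: gM.
by apply: contra_neq nz => ->.
Qed.

Section FunDiag.
Variable R : pzRingType.

Definition fdiag_mx n (d : nat -> R) : 'M[R]_n := diag_mx (\row_(i < n) d i).

Lemma fdiag_mxE n d (i j : 'I_n) : fdiag_mx n d i j = d i *+ (i == j).
Proof. by rewrite !mxE. Qed.

Lemma eq_fdiag_mx n (d e : nat -> R) :
  (forall i : 'I_n, d i = e i) -> fdiag_mx n d = fdiag_mx n e.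
Proof. by move=> de; apply/matrixP => i j; rewrite !fdiag_mxE de. Qed.

Lemma scalar1_fdiag n : 1%:M = fdiag_mx n (fun=> 1).
Proof. by apply/matrixP => i j; rewrite fdiag_mxE mxE. Qed.

Lemma fdiag_mxM n (d e : nat -> R) :
  fdiag_mx n d *m fdiag_mx n e = fdiag_mx n (fun k => d k * e k).
Proof. by rewrite mulmx_diag; congr diag_mx; apply/matrixP => i j; rewrite !mxE. Qed.

Lemma tensmx_fdiag m p (d e : nat -> R) :
  fdiag_mx m d *t fdiag_mx p e
  = fdiag_mx (m * p) (fun k => d (k %/ p)%N * e (k %% p)%N).
Proof.
apply/matrixP => i j; rewrite mxE !fdiag_mxE /=.
rewrite -(inj_eq (can_inj (@mxtens_unindexK m p))) xpair_eqE.
by case: (_ == _); case: (_ == _); rewrite ?mulr0n ?mulr1n ?mul0r ?mulr0.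
Qed.

Lemma castmx_fdiag n n' (e : n = n') (d : nat -> R) :
  castmx (e, e) (fdiag_mx n d) = fdiag_mx n' d.
Proof.
by apply/matrixP => i j; rewrite castmxE !fdiag_mxE /= (inj_eq (@cast_ord_inj _ _ _)).
Qed.

End FunDiag.

Section CommutingWithDiagonal.
Variable R : comPzRingType.

Lemma graded_fdiag_commute n (M : 'M[R]_n) T (f : nat -> T) (h : T -> R)
    (d : nat -> R) :
  graded f f M -> (forall k : 'I_n, d k = h (f k)) ->
  M *m fdiag_mx n d = fdiag_mx n d *m M.
Proof.
move=> gM dE; rewrite mul_mx_diag mul_diag_mx; apply/matrixP => i j; rewrite !mxE.
have [->|/gM fij] := eqVneq (M i j) 0; first by rewrite mulr0 mul0r.
by rewrite !dE fij mulrC.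
Qed.

Lemma graded_commute_fdiag2 n (M : 'M[R]_n) T (f : nat -> T) (h : T -> R)
    (d e : nat -> R) :
  graded f f M -> (forall k : 'I_n, d k * e k = h (f k)) ->
  M *m fdiag_mx n d *m fdiag_mx n e = fdiag_mx n e *m fdiag_mx n d *m M.
Proof.
move=> gM deE; rewrite -mulmxA !fdiag_mxM (graded_fdiag_commute gM deE).
by congr (_ *m _); apply: eq_fdiag_mx => k; rewrite mulrC.
Qed.

End CommutingWithDiagonal.

Section TensorIndices.
Local Open Scope nat_scope.

Lemma divn_index x y n : y < n -> (x * n + y) %/ n = x.
Proof. by move=> lt_yn; rewrite /divn edivn_eq. Qed.

Lemma modn_index x y n : y < n -> (x * n + y) %% n = y.
Proof. by move=> lt_yn; rewrite modn_def edivn_eq. Qed.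

Definition tens_weight n k := k %/ n + k %% n.

Lemma tens_weight_small n k : k < n -> tens_weight n k = k.
Proof. by move=> lt_kn; rewrite /tens_weight divn_small // modn_small. Qed.

Lemma tens_weight_large n k : n <= k -> k < 2 * n -> tens_weight n k = (k - n).+1.
Proof.
move=> le_nk lt_k2n; have -> : k = 1 * n + (k - n) by lia.
by rewrite /tens_weight divn_index ?modn_index; lia.
Qed.

Definition coord1 n2 n3 k := k %/ n3 %/ n2.
Definition coord2 n2 n3 k := k %/ n3 %% n2.
Definition coord3 (n2 n3 k : nat) := k %% n3.
Definition tens3_weight n2 n3 k := coord1 n2 n3 k + coord2 n2 n3 k + coord3 n2 n3 k.

Lemma coord1_divn n2 n3 k : k %/ (n2 * n3) = coord1 n2 n3 k.
Proof. by rewrite /coord1 mulnC divnMA. Qed.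

Lemma coord2_modn n2 n3 k : k %% (n2 * n3) %/ n3 = coord2 n2 n3 k.
Proof. by rewrite /coord2 modn_divl. Qed.

Lemma coord3_modn n2 n3 k : k %% (n2 * n3) %% n3 = coord3 n2 n3 k.
Proof. by rewrite /coord3 modn_dvdm // dvdn_mull. Qed.

Lemma tens3_weightE n2 n3 k :
  tens3_weight n2 n3 k = k %/ (n2 * n3) + tens_weight n3 (k %% (n2 * n3)).
Proof. by rewrite /tens_weight coord1_divn coord2_modn coord3_modn addnA. Qed.

Lemma coord2_lt n1 n2 n3 (k : 'I_(n1 * n2 * n3)) : coord2 n2 n3 k < n2.
Proof. exact: ltn_ord (mxtens_unindex (mxtens_unindex k).1).2. Qed.

Lemma coord3_lt n1 n2 n3 (k : 'I_(n1 * n2 * n3)) : coord3 n2 n3 k < n3.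
Proof. exact: ltn_ord (mxtens_unindex k).2. Qed.

End TensorIndices.

Definition swap23 n1 n2 n3 (k : 'I_(n1 * n2 * n3)) : 'I_(n1 * n3 * n2) :=
  let: (k12, k3) := mxtens_unindex k in
  let: (k1, k2) := mxtens_unindex k12 in
  mxtens_index (mxtens_index (k1, k3), k2).

Lemma swap23_divn n1 n2 n3 (k : 'I_(n1 * n2 * n3)) :
  (swap23 k %/ n2 = coord1 n2 n3 k * n3 + coord3 n2 n3 k)%N.
Proof. exact: divn_index (coord2_lt k). Qed.

Lemma swap23_modn n1 n2 n3 (k : 'I_(n1 * n2 * n3)) :
  (swap23 k %% n2 = coord2 n2 n3 k)%N.
Proof. exact: modn_index (coord2_lt k). Qed.

Lemma swap23K n1 n2 n3 : cancel (@swap23 n1 n2 n3) (@swap23 n1 n3 n2).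
Proof.
move=> k; rewrite /swap23 !mxtens_indexK /=.
by apply: val_inj; rewrite /= -!divn_eq.
Qed.

Lemma flip23E (R : pzRingType) n1 n2 n3
    (i : 'I_(n1 * n2 * n3)) (k : 'I_(n1 * n3 * n2)) :
  flip23 n1 n2 n3 i k = (k == swap23 i)%:R :> R.
Proof.
case: (mxtens_indexP i) => i12 i3; case: (mxtens_indexP i12) => i1 i2.
case: (mxtens_indexP k) => k13 k2; case: (mxtens_indexP k13) => k1 k3.
have index_eq m n := inj_eq (can_inj (@mxtens_indexK m n)).
rewrite mxE /swap23 !mxtens_indexK index_eq xpair_eqE index_eq xpair_eqE.
by rewrite (eq_sym k1) (eq_sym k2) (eq_sym k3) andbAC.
Qed.

Section Legs.
Variable R : pzRingType.
Variables n1 n2 n3 : nat.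

Lemma flip23_rowsub :
  flip23 n1 n2 n3 = rowsub (@swap23 n1 n2 n3) 1%:M :> 'M[R]_(_, _).
Proof. by apply/matrixP => i k; rewrite flip23E !mxE eq_sym. Qed.

Lemma flip23_colsub :
  flip23 n1 n3 n2 = colsub (@swap23 n1 n2 n3) 1%:M :> 'M[R]_(_, _).
Proof.
apply/matrixP => k j; rewrite flip23E !mxE.
by rewrite -(inj_eq (can_inj (@swap23K n1 n2 n3))) swap23K eq_sym.
Qed.

Lemma leg13E (X : 'M[R]_(n1 * n3)) :
  leg13 n1 n2 n3 X = mxsub (@swap23 n1 n2 n3) (@swap23 n1 n2 n3) (X *t 1%:M).
Proof.
rewrite /leg13 flip23_rowsub flip23_colsub mul_rowsub_mx mul1mx mulmx_colsub mulmx1.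
by apply/matrixP => i j; rewrite !mxE.
Qed.

Lemma leg12_graded (X : 'M[R]_(n1 * n2)) :
  graded (tens_weight n2) (tens_weight n2) X ->
  graded (fun k => (coord1 n2 n3 k + coord2 n2 n3 k, coord3 n2 n3 k))%N
         (fun k => (coord1 n2 n3 k + coord2 n2 n3 k, coord3 n2 n3 k))%N
         (leg12 n1 n2 n3 X).
Proof. by move=> gX; exact (graded_tens pair gX (graded_scalar1 (n := n3) id)). Qed.

Lemma leg23_graded (X : 'M[R]_(n2 * n3)) :
  graded (tens_weight n3) (tens_weight n3) X ->
  graded (fun k => (coord1 n2 n3 k, coord2 n2 n3 k + coord3 n2 n3 k))%N
         (fun k => (coord1 n2 n3 k, coord2 n2 n3 k + coord3 n2 n3 k))%N
         (leg23 n1 n2 n3 X).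
Proof.
move=> gX; apply/graded_castmx/(graded_regrade (h := id) _ _
  (graded_tens pair (graded_scalar1 id) gX)) => k;
  by rewrite /= /tens_weight coord1_divn coord2_modn coord3_modn.
Qed.

Lemma leg13_graded (X : 'M[R]_(n1 * n3)) :
  graded (tens_weight n3) (tens_weight n3) X ->
  graded (fun k => (coord1 n2 n3 k + coord3 n2 n3 k, coord2 n2 n3 k))%N
         (fun k => (coord1 n2 n3 k + coord3 n2 n3 k, coord2 n2 n3 k))%N
         (leg13 n1 n2 n3 X).
Proof.
move=> gX i j; rewrite leg13E mxE => /(graded_tens pair gX (graded_scalar1 id)) /=.
by rewrite !swap23_divn !swap23_modn /tens_weight !divn_index ?modn_index ?coord3_lt.
Qed.

Lemma leg12_graded_weight (X : 'M[R]_(n1 * n2)) :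
  graded (tens_weight n2) (tens_weight n2) X ->
  graded (tens3_weight n2 n3) (tens3_weight n2 n3) (leg12 n1 n2 n3 X).
Proof. by move/leg12_graded; apply: (graded_regrade (h := fun p => p.1 + p.2)%N). Qed.

Lemma leg23_graded_weight (X : 'M[R]_(n2 * n3)) :
  graded (tens_weight n3) (tens_weight n3) X ->
  graded (tens3_weight n2 n3) (tens3_weight n2 n3) (leg23 n1 n2 n3 X).
Proof.
move/leg23_graded; apply: (graded_regrade (h := fun p => p.1 + p.2)%N) => k;
  by rewrite /tens3_weight addnA.
Qed.

Lemma leg13_graded_weight (X : 'M[R]_(n1 * n3)) :
  graded (tens_weight n3) (tens_weight n3) X ->
  graded (tens3_weight n2 n3) (tens3_weight n2 n3) (leg13 n1 n2 n3 X).
Proof.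
move/leg13_graded; apply: (graded_regrade (h := fun p => p.1 + p.2)%N) => k;
  by rewrite /tens3_weight addnAC.
Qed.

Lemma leg12_fdiag (d : nat -> R) :
  leg12 n1 n2 n3 (fdiag_mx _ d) = fdiag_mx _ (fun k => d (k %/ n3)%N).
Proof.
by rewrite /leg12 scalar1_fdiag tensmx_fdiag; apply: eq_fdiag_mx => k; rewrite mulr1.
Qed.

Lemma leg23_fdiag (d : nat -> R) :
  leg23 n1 n2 n3 (fdiag_mx _ d) = fdiag_mx _ (fun k => d (k %% (n2 * n3))%N).
Proof.
rewrite /leg23 scalar1_fdiag tensmx_fdiag castmx_fdiag.
by apply: eq_fdiag_mx => k; rewrite mul1r.
Qed.

Lemma leg13_fdiag (d : nat -> R) :
  leg13 n1 n2 n3 (fdiag_mx _ d)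
  = fdiag_mx _ (fun k => d (coord1 n2 n3 k * n3 + coord3 n2 n3 k)%N).
Proof.
rewrite leg13E scalar1_fdiag tensmx_fdiag; apply/matrixP => i j.
by rewrite !mxE swap23_divn mulr1 (inj_eq (can_inj (@swap23K _ _ _))).
Qed.

End Legs.

Section WeightConservation.
Variable F : fieldType.
Variables (qh : F) (sq : F -> F).

Lemma Kc0 : Kc (0 : F) = 0.
Proof. by rewrite /Kc polyC0 rmorph0. Qed.

Lemma Rbase_graded t : graded (tens_weight 2) (tens_weight 2) (Rbase qh t).
Proof. by move=> [[|[|[|[|i]]]] lti] [[|[|[|[|j]]]] ltj]; rewrite mxE //= eqxx. Qed.

Lemma Fmat_graded m : graded id (tens_weight m.+2) (Fmat qh sq m).
Proof.
move=> i j; rewrite mxE /=; have := ltn_ord i; have := ltn_ord j.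
case: ifP => [/andP[lt_jN /eqP [->]] _ _ _ | _].
  by rewrite tens_weight_small.
case: ifP => [/andP[lt_Nj /eqP [->]] lt_j2N _ _ | _ _ _]; last by rewrite eqxx.
by rewrite tens_weight_large //; lia.
Qed.

Lemma Emat_graded m : graded (tens_weight m.+2) id (Emat qh sq m).
Proof.
move=> i j; rewrite mxE /=; have := ltn_ord i; have := ltn_ord j.
case: ifP => [/andP[lt_iN /eqP [->]] _ _ _ | _].
  by rewrite tens_weight_small.
case: ifP => [/andP[lt_Ni /eqP [->]] _ lt_i2N _ | _ _ _]; last by rewrite eqxx.
by rewrite tens_weight_large //; lia.
Qed.

Lemma Rhalf_graded m t :
  graded (tens_weight m.+2) (tens_weight m.+2) (Rhalf qh sq m t).
Proof.
elim: m t => [|m IHm] t /=; first exact: Rbase_graded.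
set w := tens3_weight 2 m.+2.
have gF := graded_tens addn (graded_scalar1 (R := K F) (n := 2) id)
  (graded_map_mx Kc0 (Fmat_graded (m := m))).
have gE := graded_tens addn (graded_scalar1 (R := K F) (n := 2) id)
  (graded_map_mx Kc0 (Emat_graded (m := m))).
apply: (graded_mul (g := w)); last first.
  apply/graded_castmx/(graded_regrade (h := id) _ _ gE) => k //.
  by rewrite /w tens3_weightE.
apply: (graded_mul (g := w)); last exact/leg12_graded_weight/Rbase_graded.
apply: (graded_mul (g := w)); last exact/leg13_graded_weight/IHm.
apply/graded_castmx/(graded_regrade (h := id) _ _ gF) => k //.
by rewrite /w tens3_weightE.
Qed.

Lemma Rgen_graded a b t :
  graded (tens_weight b.+2) (tens_weight b.+2) (Rgen qh sq a b t).
Proof.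
elim: a t => [|a IHa] t /=; first exact: Rhalf_graded.
set w := tens3_weight a.+2 b.+2.
have gF := graded_tens addn (graded_map_mx Kc0 (Fmat_graded (m := a)))
  (graded_scalar1 (R := K F) (n := b.+2) id).
have gE := graded_tens addn (graded_map_mx Kc0 (Emat_graded (m := a)))
  (graded_scalar1 (R := K F) (n := b.+2) id).
apply: (graded_mul (g := w)); last exact gE.
apply: (graded_mul (g := w)); last exact/leg23_graded_weight/IHa.
apply: (graded_mul (g := w)); last exact/leg13_graded_weight/Rhalf_graded.
exact gF.
Qed.
End WeightConservation.

Section RhatDiagonal.
Variable F : fieldType.
Variable qh : F.
Hypothesis qh_neq0 : qh != 0.

Definition qpow (x : int) : K F := Kc (qh ^ x).

Lemma qpowD x y : qpow x * qpow y = qpow (x + y).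
Proof. by rewrite /qpow /Kc -rmorphM -polyCM expfzDr. Qed.

(* For 2 j = a + 1, spin2 a i = 2 alpha with alpha = j - i the (i+1)-th entry
   of diag(j, ..., -j). *)
Definition spin2 (a i : nat) : int := a.+1%:Z - 2 * i%:Z.

Lemma spin2D a b i j : spin2 a i + spin2 b j = spin2 (a + b).+1 (i + j).
Proof. by rewrite /spin2 !PoszD; ring. Qed.

Lemma Rhat_fdiag a b :
  Rhat qh a b
  = fdiag_mx _ (fun k => qpow (spin2 a (k %/ b.+2) * spin2 b (k %% b.+2))).
Proof. by apply/matrixP => i j; rewrite fdiag_mxE mxE; case: eqP. Qed.

Lemma leg12_Rhat a b n :
  leg12 a.+2 b.+2 n (Rhat qh a b)
  = fdiag_mx _ (fun k =>
      qpow (spin2 a (coord1 b.+2 n k) * spin2 b (coord2 b.+2 n k))).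
Proof. by rewrite Rhat_fdiag leg12_fdiag. Qed.

Lemma leg23_Rhat b c n :
  leg23 n b.+2 c.+2 (Rhat qh b c)
  = fdiag_mx _ (fun k =>
      qpow (spin2 b (coord2 b.+2 c.+2 k) * spin2 c (coord3 b.+2 c.+2 k))).
Proof.
rewrite Rhat_fdiag leg23_fdiag; apply: eq_fdiag_mx => k.
by rewrite coord2_modn coord3_modn.
Qed.

Lemma leg13_Rhat a c n :
  leg13 a.+2 n c.+2 (Rhat qh a c)
  = fdiag_mx _ (fun k =>
      qpow (spin2 a (coord1 n c.+2 k) * spin2 c (coord3 n c.+2 k))).
Proof.
rewrite Rhat_fdiag leg13_fdiag; apply: eq_fdiag_mx => k.
by rewrite divn_index ?modn_index ?coord3_lt.
Qed.

End RhatDiagonal.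

Unset Implicit Arguments. Set Strict Implicit.

Theorem lemma5p4 (F : fieldType) (Fchar0 : [pchar F] =i pred0)
  (sq : F -> F) (sqE : forall x : F, sq x ^+ 2 = x)
  (qh : F) (qh_neq0 : qh != 0)
  (q_not_root_of_unity : forall n : nat, (0 < n)%N -> q qh ^+ n != 1)
  (a b c : nat) :
  let t := tK F in
  let R12 := leg12 a.+2 b.+2 c.+2 (Rgen qh sq a b t) in
  let R13 := leg13 a.+2 b.+2 c.+2 (Rgen qh sq a c t) in
  let R23 := leg23 a.+2 b.+2 c.+2 (Rgen qh sq b c t) in
  let H12 := leg12 a.+2 b.+2 c.+2 (Rhat qh a b) in
  let H13 := leg13 a.+2 b.+2 c.+2 (Rhat qh a c) in
  let H23 := leg23 a.+2 b.+2 c.+2 (Rhat qh b c) in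
  (R12 *m H13 *m H23 = H23 *m H13 *m R12) /\
  (R13 *m H23 *m H12 = H12 *m H23 *m R13) /\
  (R23 *m H12 *m H13 = H13 *m H12 *m R23) /\
  (R12 *m H23 *m H13 = H13 *m H23 *m R12) /\
  (R13 *m H12 *m H23 = H23 *m H12 *m R13) /\
  (R23 *m H13 *m H12 = H12 *m H13 *m R23).
Proof.
move=> t R12 R13 R23 H12 H13 H23.
have gR12 := leg12_graded (n1 := a.+2) (n3 := c.+2) (@Rgen_graded F qh sq a b t).
have gR13 := leg13_graded (n2 := b.+2) (@Rgen_graded F qh sq a c t).
have gR23 := leg23_graded (n1 := a.+2) (@Rgen_graded F qh sq b c t).
pose h12 p := qpow qh (spin2 (a + b).+1 p.1 * spin2 c p.2).
pose h13 p := qpow qh (spin2 (a + c).+1 p.1 * spin2 b p.2).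
pose h23 p := qpow qh (spin2 a p.1 * spin2 (b + c).+1 p.2).
rewrite {}/H12 {}/H13 {}/H23 leg12_Rhat leg13_Rhat leg23_Rhat.
split; last split; last split; last split; last split;
  [ apply: (graded_commute_fdiag2 (h := h12) gR12)
  | apply: (graded_commute_fdiag2 (h := h13) gR13)
  | apply: (graded_commute_fdiag2 (h := h23) gR23)
  | apply: (graded_commute_fdiag2 (h := h12) gR12)
  | apply: (graded_commute_fdiag2 (h := h13) gR13)
  | apply: (graded_commute_fdiag2 (h := h23) gR23) ];
  by move=> k; unfold h12, h13, h23; rewrite qpowD // -spin2D; congr (qpow _ _); ring.
Qed.
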